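(* Let $n\ge2$ and $\mu\in(0,\frac1n(\frac{n-1}{n})^{n-1}]$. Let $f>0$ be a solution on $\mathbb{R}$ of $$\mu=\frac{f(x)^{n-1}}{(1+f'(x)^2)^{1/2}}-f(x)^n,$$ and let $V=n\bigl(1+(n-1)\mu^2f^{-2n}\bigr)$. Then for every $x\in\mathbb{R}$, $V(x)f(x)^2\le n^2$.
   Context: The function $f$ is the profile of the Euclidean Delaunay unduloid $\mathcal{D}(\mu)$, parametrized by $(x,\omega)\mapsto(x,f(x)\omega)$, with constant mean curvature $1$. The function $V=\|B\|^2$ is the potential of its stability operator $\Delta-V$. The function $f$ takes values between the two positive roots $a_-(\mu)\le a_+(\mu)$ of $X^n-X^{n-1}+\mu=0$. *)

From Stdlib Require Import Reals.
From Coquelicot Require Import Coquelicot.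
Open Scope R_scope.

Definition potV (n : nat) (mu fx : R) : R :=
  INR n * (1 + (INR n - 1) * mu ^ 2 / fx ^ (2 * n)).

(* Writing t = (1 + f'^2)^(-1/2), which lies in (0, 1], the equation reads
   mu = f^(n-1) (t - f), so mu f^(-n) = (t - f) / f and
   V f^2 = n (f^2 + (n-1) (t - f)^2).  Positivity of mu forces 0 < f < t <= 1,
   hence both squares are at most 1 and V f^2 <= n^2. *)
From Stdlib Require Import Reals Lra Psatz.
From Coquelicot Require Import Coquelicot.
Open Scope R_scope.

Lemma inv_sqrt_1_plus_sq_bounds (d : R) : 0 < / sqrt (1 + d ^ 2) <= 1.
Proof.
  assert (hs : 1 <= sqrt (1 + d ^ 2)).
  { rewrite <- sqrt_1 at 1. apply sqrt_le_1_alt. nra. }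
  split.
  - apply Rinv_0_lt_compat. lra.
  - rewrite <- Rinv_1 at 2. apply Rinv_le_contravar; lra.
Qed.

Lemma pow_pred_div_sub_pow (n : nat) (y s : R) :
  (1 <= n)%nat -> y ^ (n - 1) / s - y ^ n = y ^ (n - 1) * (/ s - y).
Proof.
  intros hn. destruct n as [|m]; [lia|].
  replace (S m - 1)%nat with m by lia. simpl. unfold Rdiv. ring.
Qed.

Lemma potV_pow_pred_mul_sq (n : nat) (y c : R) :
  (1 <= n)%nat -> 0 < y ->
  potV n (y ^ (n - 1) * c) y * y ^ 2 = INR n * (y ^ 2 + (INR n - 1) * c ^ 2).
Proof.
  intros hn hy. destruct n as [|m]; [lia|].
  replace (S m - 1)%nat with m by lia.
  unfold potV. rewrite Nat.mul_comm, pow_mult. simpl (y ^ S m).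
  assert (y ^ m <> 0) by (apply pow_nonzero; lra).
  field. split; lra.
Qed.

Lemma weighted_sum_sq_le (N y t : R) :
  1 <= N -> 0 < y < t -> t <= 1 -> N * (y ^ 2 + (N - 1) * (t - y) ^ 2) <= N ^ 2.
Proof.
  intros hN hyt ht.
  assert (hy2 : y ^ 2 <= 1) by nra.
  assert (hty2 : (t - y) ^ 2 <= 1) by nra.
  assert ((N - 1) * (t - y) ^ 2 <= N - 1) by nra.
  nra.
Qed.

Theorem lemma3p1 (n : nat) (mu : R) (f : R -> R)
  (hn : (2 <= n)%nat)
  (hmu0 : 0 < mu)
  (hmu1 : mu <= / INR n * ((INR n - 1) / INR n) ^ (n - 1))
  (hpos : forall x, 0 < f x)
  (hder : forall x, ex_derive f x)
  (hode : forall x,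
     mu = f x ^ (n - 1) / sqrt (1 + (Derive f x) ^ 2) - f x ^ n) :
  forall x, potV n mu (f x) * f x ^ 2 <= INR n ^ 2.
Proof.
  intros x.
  assert (hn1 : (1 <= n)%nat) by lia.
  pose proof (hpos x) as hy.
  pose proof (inv_sqrt_1_plus_sq_bounds (Derive f x)) as ht.
  pose proof (hode x) as hmu. rewrite pow_pred_div_sub_pow in hmu by exact hn1.
  set (y := f x) in *. set (t := / sqrt (1 + Derive f x ^ 2)) in *.
  assert (hyt : y < t).
  { pose proof (pow_lt y (n - 1) hy). nra. }
  rewrite hmu, potV_pow_pred_mul_sq by assumption.
  apply weighted_sum_sq_le; try lra.
  apply (le_INR 1) in hn1. simpl in hn1. exact hn1.
Qed.
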